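(* Let $(\mathbf{x}, y, a)$ be jointly distributed according to a distribution $P$ with $\mathbf{x}\in\mathbb{R}^d$, $y\in\mathcal{Y}=\{1,\ldots,L\}$ and $a\in\mathcal{A}$, where $|\mathcal{A}|=K$, and assume every group has positive prior, $P(y,a)>0$ for all $(y,a)\in\mathcal{Y}\times\mathcal{A}$. For a scoring function $f:\mathbb{R}^d\to\mathbb{R}^L$ define its group-balanced accuracy $$GBA(f)=\frac{1}{KL}\sum_{(y_0,a_0)\in\mathcal{Y}\times\mathcal{A}} P\Big(y=\arg\max_{y'\in\mathcal{Y}} f_{y'}(\mathbf{x}) \,\Big|\, (y,a)=(y_0,a_0)\Big).$$ Then the classifier that assigns to each input $\mathbf{x}$ the prediction $$\arg\max_{y\in\mathcal{Y}}\sum_{a\in\mathcal{A}}\frac{P(y,a\mid\mathbf{x})}{P(y,a)} \;=\; \arg\max_{y\in\mathcal{Y}}\sum_{a\in\mathcal{A}}\frac{P(y\mid a,\mathbf{x})\,P(a\mid\mathbf{x})}{P(y,a)}$$ maximizes $GBA$; i.e. any $f^\ast$ with $\arg\max_{y}f^\ast_y(\mathbf{x})$ equal to this prediction for every $\mathbf{x}$ satisfies $f^\ast\in\arg\max_f GBA(f)$.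
   Context: $\mathcal{A}$ is the set of values of a (spurious) attribute; a group is a pair $g=(y,a)\in\mathcal{Y}\times\mathcal{A}$. $P(y,a)$ denotes the prior probability of group $(y,a)$ and $P(y,a\mid\mathbf{x})$ the true posterior probability of group $(y,a)$ given $\mathbf{x}$; $P(y\mid a,\mathbf{x})$ and $P(a\mid\mathbf{x})$ are the corresponding conditional probabilities under $P$. *)

From HB Require Import structures.
From mathcomp Require Import all_boot all_order all_algebra.
From mathcomp Require Import all_classical all_reals all_analysis.
Set Implicit Arguments. Unset Strict Implicit. Unset Printing Implicit Defensive.
Import Order.TTheory GRing.Theory Num.Theory.
Import numFieldNormedType.Exports.
Local Open Scope classical_set_scope.
Local Open Scope ring_scope.

Definition Rd (R : realType) (d : nat) := g_sigma_algebraType (@open 'rV[R]_d).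
HB.instance Definition _ (R : realType) (d : nat) :=
  Measurable.on (g_sigma_algebraType (@open 'rV[R]_d)).
HB.instance Definition _ (R : realType) (d : nat) :=
  Measurable.copy (Rd R d) (g_sigma_algebraType (@open 'rV[R]_d)).

(* Labels Y = {0,...,L}, i.e. L+1 classes (the paper's {1,...,L'} with L' = L+1). *)
Definition argmax (R : realType) (L : nat) (v : 'I_L.+1 -> R) : 'I_L.+1 :=
  [arg max_(i > ord0) v i]%O.

Section GBA.
Variables (R : realType) (dim : nat) (L : nat) (A : finType).
Variable mu : probability (Rd R dim) R.            (* marginal law of x *)
Variable eta : Rd R dim -> ('I_L.+1 * A) -> R.      (* posterior P(y,a | x) *)

Definition prior (g : 'I_L.+1 * A) : R := \int[mu]_x eta x g.

(* P(y = argmax_y' f_y'(x) | (y,a) = g) = P(argmax f(x) = g.1, (y,a) = g) / P(g) *)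
Definition group_acc (f : Rd R dim -> 'I_L.+1 -> R) (g : 'I_L.+1 * A) : R :=
  (\int[mu]_(x in [set x | argmax (f x) = g.1]) eta x g) / prior g.

Definition GBA (f : Rd R dim -> 'I_L.+1 -> R) : R :=
  (#|A| * L.+1)%:R^-1 * \sum_(g : 'I_L.+1 * A) group_acc f g.

Definition bayes_pred (x : Rd R dim) : 'I_L.+1 :=
  argmax (fun y => \sum_(a : A) eta x (y, a) / prior (y, a)).
End GBA.

From HB Require Import structures.
From mathcomp Require Import all_boot all_order all_algebra.
From mathcomp Require Import all_classical all_reals all_analysis.
Import Order.TTheory GRing.Theory Num.Theory.
Import numFieldTopology.Exports.
Set Implicit Arguments. Unset Strict Implicit. Unset Printing Implicit Defensive.
Local Open Scope classical_set_scope.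
Local Open Scope ring_scope.

(* Write p for the prior and s(x, y) = sum_a P(y, a | x) / p(y, a).  Dividing
   the joint probability of a hit on group g by p(g) turns the sum of the
   group accuracies of a classifier c into the integral of
   sum_g 1[c x = g.1] P(g | x) / p(g) = s(x, c x).  Hence GBA(c) is, up to the
   factor 1/(KL), the integral of s(x, c x), and choosing c x = argmax_y s(x, y)
   maximizes the integrand pointwise. *)

Lemma le_argmax (R : realType) (L : nat) (v : 'I_L.+1 -> R) (j : 'I_L.+1) :
  v j <= v (argmax v).
Proof. by rewrite /argmax; case: arg_maxP => //= i _; apply. Qed.

(* argmax v only depends on the table of comparisons v j <= v i, so its fibres
   are finite Boolean combinations of the measurable sets {v j <= v i}. *)
Definition cmp_table (R : realType) (L : nat) (v : 'I_L.+1 -> R) :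
    {ffun 'I_L.+1 * 'I_L.+1 -> bool} :=
  [ffun ij => v ij.2 <= v ij.1].

Definition argmax_of_cmp (L : nat) (b : {ffun 'I_L.+1 * 'I_L.+1 -> bool}) :
    'I_L.+1 :=
  odflt ord0 [pick i | [forall j, b (i, j)]].

Lemma argmax_cmp_table (R : realType) (L : nat) (v : 'I_L.+1 -> R) :
  argmax v = argmax_of_cmp (cmp_table v).
Proof.
rewrite /argmax /argmax_of_cmp /Order.arg_max /extremum; congr odflt.
by apply: eq_pick => i /=; apply: eq_forallb => j; rewrite ffunE.
Qed.

Lemma measurable_finite_valued d (T : measurableType d) (K : finType)
    (h : T -> K) (P : pred K) :
  (forall k, measurable [set x | h x = k]) -> measurable [set x | P (h x)].
Proof.
move=> mh.
have -> : [set x | P (h x)] = \bigcup_(k in [set k | P k]) [set x | h x = k].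
  by apply/seteqP; split=> [x Px|x [k /= Pk ->]]; [exists (h x)|].
by apply: fin_bigcup_measurable => //; exact: finite_finset.
Qed.

Section measurable_argmax.
Context d (T : measurableType d) (R : realType) (L : nat).
Variable v : T -> 'I_L.+1 -> R.
Hypothesis mv : forall y, measurable_fun setT (v ^~ y).

Lemma measurable_cmp_table_fiber b :
  measurable [set x | cmp_table (v x) = b].
Proof.
have -> : [set x | cmp_table (v x) = b] =
    \bigcap_(ij in [set: 'I_L.+1 * 'I_L.+1])
      [set x | (v x ij.2 <= v x ij.1) = b ij].
  apply/seteqP; split=> [x <- ij _|x bx]; first by rewrite /= ffunE.
  by apply/ffunP => ij; rewrite ffunE; exact: bx.
apply: fin_bigcap_measurable => // ij _.
(* every subset of bool is measurable *)
have := measurable_realfun.measurable_fun_ler (mv ij.2) (mv ij.1) measurableT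
  (I : measurable [set b ij]).
by rewrite setTI.
Qed.

Lemma measurable_argmax_fiber y : measurable [set x | argmax (v x) = y].
Proof.
have -> : [set x | argmax (v x) = y] =
    [set x | (fun b => argmax_of_cmp b == y) (cmp_table (v x))].
  by apply/seteqP; split=> x /=; rewrite argmax_cmp_table => /eqP.
exact: measurable_finite_valued (fun b => argmax_of_cmp b == y)
  measurable_cmp_table_fiber.
Qed.

End measurable_argmax.

Lemma bounded_integrable d (T : measurableType d) (R : realType)
    (mu : {finite_measure set T -> \bar R}) (f : T -> R) (M : R) :
  measurable_fun setT f -> (forall x, `|f x| <= M) ->
  mu.-integrable setT (EFin \o f).
Proof.
move=> mf fM; apply: measurable_bounded_integrable => //.
  exact: fin_num_fun_lty (fin_num_measure mu).
exists M; split; first exact: num_real.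
by move=> N MN x _; apply: le_trans (fM x) (ltW MN).
Qed.

Lemma Rintegral_sum d (T : measurableType d) (R : realType)
    (mu : {measure set T -> \bar R}) (I : Type) (s : seq I) (F : I -> T -> R) :
  (forall i, mu.-integrable setT (EFin \o F i)) ->
  \int[mu]_x (\sum_(i <- s) F i x) = \sum_(i <- s) \int[mu]_x F i x.
Proof.
move=> intF; elim: s => [|i s IHs].
  by under eq_Rintegral do rewrite big_nil; rewrite big_nil Rintegral_cst ?mul0r.
have int_sum : mu.-integrable setT (EFin \o fun x => \sum_(j <- s) F j x).
  apply: (@eq_integrable _ _ _ mu _ measurableT
    (fun x => \sum_(j <- s) (EFin \o F j) x)).
    by move=> x _; rewrite /= sumEFin.
  exact: integrable_sum.
rewrite big_cons -IHs -RintegralD //.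
by apply: eq_Rintegral => x _; rewrite big_cons.
Qed.

Section group_balanced_accuracy.
Variables (R : realType) (dim L : nat) (A : finType).
Variable mu : probability (Rd R dim) R.
Variable eta : Rd R dim -> 'I_L.+1 * A -> R.
Hypothesis eta_meas : forall g, measurable_fun setT (fun x => eta x g).
Hypothesis eta_ge0 : forall x g, 0 <= eta x g.
Hypothesis eta_sum1 : forall x, \sum_g eta x g = 1.
Hypothesis prior_gt0 : forall g, 0 < prior mu eta g.

Local Notation T := (Rd R dim).
Local Notation p := (prior mu eta).

Definition score (x : T) (y : 'I_L.+1) : R := \sum_(a : A) eta x (y, a) / p (y, a).

Lemma measurable_eta_div_prior g : measurable_fun setT (fun x => eta x g / p g).
Proof. exact: measurable_realfun.measurable_funM (eta_meas g) (measurable_cst _). Qed.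

Lemma measurable_score y : measurable_fun setT (score ^~ y).
Proof. by apply: measurable_sum => a; exact: measurable_eta_div_prior. Qed.

Lemma norm_eta_le1 x g : `|eta x g| <= 1.
Proof.
rewrite ger0_norm // -(eta_sum1 x) (bigD1 g) //= lerDl.
exact: sumr_ge0.
Qed.

Definition hit_weight (c : T -> 'I_L.+1) (g : 'I_L.+1 * A) (x : T) : R :=
  if c x == g.1 then eta x g / p g else 0.

Lemma sum_hit_weight c x : \sum_g hit_weight c g x = score x (c x).
Proof.
transitivity (\sum_y \sum_(a : A) hit_weight c (y, a) x).
  by rewrite pair_bigA; apply: eq_bigr => -[].
rewrite (bigD1 (c x)) //= [X in _ + X]big1 ?addr0.
  by apply: eq_bigr => a _; rewrite /hit_weight eqxx.
move=> y /negbTE ncy; apply: big1 => a _.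
by rewrite /hit_weight /= eq_sym ncy.
Qed.

Lemma hit_weight_patch c g :
  hit_weight c g = (fun x : T => eta x g / p g : R) \_ [set x | c x = g.1].
Proof.
apply/funext => x; rewrite patchE /hit_weight.
by case: eqP => [cx|ncx]; [rewrite mem_set | rewrite memNset].
Qed.

Section classifier.
Variable c : T -> 'I_L.+1.
Hypothesis mc : forall y, measurable [set x | c x = y].

Lemma integrable_hit_weight g : mu.-integrable setT (EFin \o hit_weight c g).
Proof.
apply: (@bounded_integrable _ _ _ mu _ (p g)^-1).
  rewrite hit_weight_patch; apply/(measurable_restrictT _ (mc g.1)).
  exact: measurable_funTS (measurable_eta_div_prior g).
move=> x; rewrite /hit_weight; case: ifP => _; last by rewrite normr0 invr_ge0 ltW.
rewrite normrM [`|_^-1|]gtr0_norm ?invr_gt0 //.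
by apply: ler_piMl; [rewrite invr_ge0 ltW | exact: norm_eta_le1].
Qed.

Lemma integrable_score_at : mu.-integrable setT (EFin \o fun x => score x (c x)).
Proof.
apply: (@eq_integrable _ _ _ mu _ measurableT
  (fun x => \sum_g (EFin \o hit_weight c g) x)).
  by move=> x _; rewrite /= sumEFin sum_hit_weight.
by apply: integrable_sum => // g _; exact: integrable_hit_weight.
Qed.

Lemma group_hit_Rintegral g :
  (\int[mu]_(x in [set x | c x = g.1]) eta x g) / p g = \int[mu]_x hit_weight c g x.
Proof.
rewrite -RintegralZr //; last first.
  apply: (integrableS measurableT (mc g.1)) => //.
  exact: bounded_integrable (eta_meas g) (norm_eta_le1 ^~ g).
rewrite Rintegral_mkcond hit_weight_patch; apply: eq_Rintegral => x _.
by rewrite !patchE; case: ifP; rewrite ?mul0r.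
Qed.

Lemma sum_group_hit_Rintegral :
  \sum_g (\int[mu]_(x in [set x | c x = g.1]) eta x g) / p g =
  \int[mu]_x score x (c x).
Proof.
rewrite (eq_bigr _ (fun g _ => group_hit_Rintegral g)) -Rintegral_sum.
  by apply: eq_Rintegral => x _; exact: sum_hit_weight.
exact: integrable_hit_weight.
Qed.

End classifier.

End group_balanced_accuracy.

Theorem proposition1 (R : realType) (dim L : nat) (A : finType)
  (mu : probability (Rd R dim) R) (eta : Rd R dim -> ('I_L.+1 * A) -> R)
  (eta_meas : forall g, measurable_fun setT (fun x => eta x g))
  (eta_ge0 : forall x g, 0 <= eta x g)
  (eta_sum1 : forall x, \sum_(g : 'I_L.+1 * A) eta x g = 1)
  (prior_pos : forall g, 0 < prior mu eta g)
  (fstar : Rd R dim -> 'I_L.+1 -> R)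
  (fstar_bayes : forall x, argmax (fstar x) = bayes_pred mu eta x) :
  forall f : Rd R dim -> 'I_L.+1 -> R,
    (forall y, measurable_fun setT (fun x => f x y)) ->
    GBA mu eta f <= GBA mu eta fstar.
Proof.
move=> f mf.
have mf_fiber := measurable_argmax_fiber mf.
have mfstar_fiber y : measurable [set x | argmax (fstar x) = y].
  under eq_set do rewrite fstar_bayes.
  by apply: measurable_argmax_fiber => z; exact: measurable_score.
rewrite /GBA /group_acc ler_wpM2l ?invr_ge0 //.
rewrite !(sum_group_hit_Rintegral eta_meas eta_ge0 eta_sum1 prior_pos) //.
apply: le_Rintegral => //.
- exact: (integrable_score_at eta_meas eta_ge0 eta_sum1 prior_pos).
- exact: (integrable_score_at eta_meas eta_ge0 eta_sum1 prior_pos).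
- by move=> x _; rewrite fstar_bayes; exact: le_argmax.
Qed.
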